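(* Let $N_1(I_1,O_1,r_1)$ and $N_2(I_2,O_2,r_2)$ be negators. Form the $(2,2,1)$-pole $M=\operatorname{NN}(N_1,N_2)$ by performing the junction of the connectors $O_1$ and $I_2$, and adding one new vertex $v$ incident with the semiedges $r_1$, $r_2$ (i.e. the dangling edges of $r_1$ and $r_2$ are joined to $v$) and with one new dangling edge whose free end is the semiedge $r_3$; the connectors of $M$ are $I_1=\{i,i'\}$, $O_2=\{o,o'\}$ and $\{r_3\}$. Then for every colouring $\varphi$ of $M$ we have $\varphi(i)\ne\varphi(i')$, $\varphi(o)\ne\varphi(o')$ and $\varphi(i)+\varphi(i')+\varphi(o)+\varphi(o')+\varphi(r_3)=0$. Moreover, if $N_1$ and $N_2$ are both perfect, then for every $5$-tuple $(a,b,c,d,e)\in\mathbb{K}^5$ with $a\ne b$, $c\ne d$ and $a+b+c+d+e=0$ there is a colouring $\varphi$ of $M$ with $(\varphi(i),\varphi(i'),\varphi(o),\varphi(o'),\varphi(r_3))=(a,b,c,d,e)$.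
   Context: A multipole consists of vertices and edges; each edge has two ends, each either incident with a vertex or free; a free end is a semiedge. A dangling edge has exactly one end at a vertex, an isolated edge has none. All multipoles are cubic (every vertex is incident with exactly three edge ends; loops and parallel edges allowed). The semiedges are partitioned into connectors; a $(c_1,\dots,c_n)$-pole has $n$ connectors of sizes $c_1,\dots,c_n$. The junction of two semiedges identifies the two free ends into a single edge; the junction of two connectors of equal size performs junctions of their semiedges along a bijection (arbitrary unless stated). Let $\mathbb{K}=\{(0,1),(1,0),(1,1)\}\subset\mathbb{Z}_2\times\mathbb{Z}_2$. A colouring of a multipole is an assignment of elements of $\mathbb{K}$ to its edges such that at each vertex the three incident edge ends receive distinct colours (equivalently, they sum to $0$). A snark is a connected cubic graph with no such colouring. Negator: let $G$ be a snark and $uwv$ a path of length two in $G$; $\operatorname{Neg}(G;u,v)$ is the $(2,2,1)$-pole $N(I,O,r)$ obtained by deleting $u,w,v$, where $I$ consists of the two semiedges formerly incident with $u$, $O$ of the two semiedges formerly incident with $v$, and $r$ is the semiedge formerly incident with $w$. A negator $N(\{i_1,i_2\},\{o_1,o_2\},r)$ is perfect if the set of tuples $(\varphi(i_1),\varphi(i_2),\varphi(o_1),\varphi(o_2),\varphi(r))$ over all colourings $\varphi$ of $N$ equals $\{(x,x,a,b,a+b),(a,b,x,x,a+b): x,a,b\in\mathbb{K},\ a\ne b\}$. *)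

From mathcomp Require Import all_boot.
Set Implicit Arguments. Unset Strict Implicit. Unset Printing Implicit Defensive.

(* Colours: K = Z2 x Z2 \ {0}, represented inside bool * bool.        *)
Definition col := (bool * bool)%type.
Definition czero : col := (false, false).
Definition inK (x : col) : bool := x != czero.
Definition cadd (x y : col) : col := (x.1 (+) y.1, x.2 (+) y.2).

(* Multipoles.  A multipole has a finite set of vertices mV and a     *)
(* finite set of edge ends mD.  [att d] is the vertex end d is        *)
(* incident with, or None when d is free (a semiedge).  Edges are the *)
(* classes of the equivalence relation generated by [lnk]; for a      *)
(* genuine multipole each class has exactly two ends ([wf_edges]).    *)
Record mpole := Mpole {
  mV : finType;
  mD : finType;
  att : mD -> option mV;
  lnk : rel mD }.

Definition eqE (M : mpole) : rel (mD M) :=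
  connect (fun a b => lnk a b || lnk b a).

Definition wf_edges (M : mpole) : Prop :=
  forall d : mD M, #|[pred d' | eqE d d']| = 2.

Definition cubic (M : mpole) : Prop :=
  forall x : mV M, #|[pred d : mD M | att d == Some x]| = 3.

Definition colouring (M : mpole) (phi : mD M -> col) : Prop :=
  [/\ (forall d, inK (phi d)),
      (forall d d', lnk d d' -> phi d = phi d') &
      (forall (d d' : mD M) (x : mV M), d != d' ->
          att d = Some x -> att d' = Some x -> phi d != phi d')].

Arguments colouring : clear implicits.

Definition colourable (M : mpole) : Prop := exists phi, colouring M phi.

Definition is_graph (M : mpole) : Prop := forall d : mD M, att d != None.

Definition adjV (M : mpole) : rel (mV M) := fun x y =>
  [exists d : mD M, exists d' : mD M,
     [&& att d == Some x, att d' == Some y & eqE d d']].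

Definition connected (M : mpole) : Prop :=
  forall x y : mV M, connect (@adjV M) x y.

Definition snark (G : mpole) : Prop :=
  [/\ wf_edges G, is_graph G, cubic G, connected G & ~ colourable G].

(* (2,2,1)-poles: a multipole with its five semiedges named           *)
(* N(I = {pi1, pi2}, O = {po1, po2}, r = pr).                          *)
Record pole221 := Pole221 {
  pm : mpole;
  pi1 : mD pm; pi2 : mD pm; po1 : mD pm; po2 : mD pm; pr : mD pm }.

Definition ptuple (N : pole221) (phi : mD (pm N) -> col) : col * col * col * col * col :=
  (phi (pi1 N), phi (pi2 N), phi (po1 N), phi (po2 N), phi (pr N)).

Arguments ptuple : clear implicits.

Definition perfect_set (t : col * col * col * col * col) : Prop :=
  exists x a b : col, [/\ inK x, inK a, inK b, a != b &
     t = (x, x, a, b, cadd a b) \/ t = (a, b, x, x, cadd a b)].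

Definition perfect (N : pole221) : Prop :=
  forall t, (exists phi, colouring (pm N) phi /\ ptuple N phi = t) <-> perfect_set t.

(* Neg(G; u, v): delete u, w, v from G (path u w v with edge {a1,b1}  *)
(* between u and w and edge {a2,b2} between w and v).  The ends of    *)
(* the two path edges disappear; the remaining ends formerly          *)
(* incident with u, w, v become free.                                 *)
Definition Neg (G : mpole) (u w v : mV G) (a1 b1 a2 b2 : mD G) : mpole :=
  @Mpole ({x : mV G | x \notin [:: u; w; v]})
         ({d : mD G | d \notin [:: a1; b1; a2; b2]})
         (fun d => obind (fun x => insub x) (att (val d)))
         (fun d d' => eqE (val d) (val d')).

Definition negator_data (G : mpole) (u w v : mV G) (a1 b1 a2 b2 : mD G)
    (i1 i2 o1 o2 r : mD (Neg u w v a1 b1 a2 b2)) : Prop :=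
  [/\ snark G,
      [/\ u != w, w != v & u != v],
      [/\ att a1 = Some u, att b1 = Some w & eqE a1 b1],
      [/\ att a2 = Some w, att b2 = Some v & eqE a2 b2] &
      [/\ [/\ att (val i1) = Some u, att (val i2) = Some u & i1 != i2],
          [/\ att (val o1) = Some v, att (val o2) = Some v & o1 != o2] &
          att (val r) = Some w]].

Definition NegPole (G : mpole) (u w v : mV G) (a1 b1 a2 b2 : mD G)
    (i1 i2 o1 o2 r : mD (Neg u w v a1 b1 a2 b2)) : pole221 :=
  @Pole221 (Neg u w v a1 b1 a2 b2) i1 i2 o1 o2 r.

(* NN(N1, N2): junction of O1 = {po1 N1, po2 N1} with I2 = {pi1 N2,   *)
(* pi2 N2} (po1 N1 -- pi1 N2, po2 N1 -- pi2 N2), a new vertex joined  *)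
(* to r1, r2 and to a new dangling edge whose free end is r3.         *)
(* Ends of the new multipole: the ends of N1 and N2 except the four   *)
(* joined semiedges, plus the two ends of the new dangling edge       *)
(* (inr false at the new vertex, inr true = r3 free).                 *)
Section NN.
Variables N1 N2 : pole221.

Definition NNT : finType := (((mD (pm N1) + mD (pm N2)) + bool)%type).
Definition NNV : finType := (((mV (pm N1) + mV (pm N2)) + unit)%type).

Definition NNremoved : seq NNT :=
  [:: inl (inl (po1 N1)); inl (inl (po2 N1)); inl (inr (pi1 N2)); inl (inr (pi2 N2))].

Definition NND : finType := ({x : NNT | x \notin NNremoved}).

Definition NNattT (x : NNT) : option NNV :=
  match x with
  | inl (inl d) => if d == pr N1 then Some (inr tt)
                   else omap (fun y => inl (inl y)) (att d)
  | inl (inr d) => if d == pr N2 then Some (inr tt)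
                   else omap (fun y => inl (inr y)) (att d)
  | inr b => if b then None else Some (inr tt)
  end.

Definition NNlinkT (x y : NNT) : bool :=
  match x, y with
  | inl (inl a), inl (inl b) => lnk a b
  | inl (inr a), inl (inr b) => lnk a b
  | inl (inl a), inl (inr b) =>
      ((a == po1 N1) && (b == pi1 N2)) || ((a == po2 N1) && (b == pi2 N2))
  | inr _, inr _ => true
  | _, _ => false
  end.

Definition NNmp : mpole :=
  @Mpole NNV NND (fun x => NNattT (val x))
    (fun x y => connect (fun a b => NNlinkT a b || NNlinkT b a) (val x) (val y)).

Lemma NN_r3_notin : (inr true : NNT) \notin NNremoved.
Proof. by rewrite !inE. Qed.

Definition NNr3 : NND := exist _ (inr true) NN_r3_notin.

Definition NNsub (x : NNT) : NND := insubd NNr3 x.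

Definition NN : pole221 :=
  @Pole221 NNmp (NNsub (inl (inl (pi1 N1)))) (NNsub (inl (inl (pi2 N1))))
                (NNsub (inl (inr (po1 N2)))) (NNsub (inl (inr (po2 N2)))) NNr3.

End NN.

(* In a cubic multipole whose edges have two ends, summing over the vertices
   the colours of the three ends at each vertex counts every edge twice, so the
   total is 0, while the three colours at a properly coloured vertex already sum
   to 0.  Extend a colouring psi of Neg(G;u,v) to G by colouring the deleted edges
   uw and wv with X = psi i1 + psi i2 and Y = psi o1 + psi o2: the sums at u and v
   vanish, hence so does the sum at w, i.e. psi r = X + Y; and if X and Y were both
   nonzero the extension would colour the snark G, so one of the two pairs is
   monochromatic.
   A colouring of NN(N1,N2) is the same as colourings of N1 and N2 agreeing on the
   junction, with r1 <> r2 and r3 = r1 + r2.  With X, Y, Z the sums of the input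
   pair of N1, the junction pair and the output pair of N2, r1 = X + Y and
   r2 = Y + Z where X or Y and Y or Z vanish; r1 <> r2 forces Y = 0, whence all
   three claims.  Conversely, for perfect negators glue colourings with boundary
   (a,b,x,x,a+b) and (x,x,c,d,c+d). *)

From HB Require Import structures.
From mathcomp Require Import all_boot.
Set Implicit Arguments. Unset Strict Implicit. Unset Printing Implicit Defensive.

Lemma caddA : associative cadd.
Proof. by do 3!case=> [[] []]. Qed.

Lemma caddC : commutative cadd.
Proof. by do 2!case=> [[] []]. Qed.

Lemma cadd0c : left_id czero cadd.
Proof. by case=> [[] []]. Qed.

HB.instance Definition _ := Monoid.isComLaw.Build col czero cadd caddA caddC cadd0c.

Lemma caddc0 : right_id czero cadd.
Proof. by case=> [[] []]. Qed.

Lemma caddxx x : cadd x x = czero.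
Proof. by case: x => [[] []]. Qed.

Lemma cadd_eq0 a b : (cadd a b == czero) = (a == b).
Proof. by move: a b; do 2!case=> [[] []]. Qed.

Lemma inK_cadd a b : inK (cadd a b) = (a != b).
Proof. by rewrite /inK cadd_eq0. Qed.

Lemma neq_caddl a b : inK b -> a != cadd a b.
Proof. by move: a b; do 2!case=> [[] []]. Qed.

Lemma neq_caddr a b : inK a -> b != cadd a b.
Proof. by rewrite caddC; apply: neq_caddl. Qed.

Lemma cadd3_eq0 a b c : (cadd (cadd a b) c == czero) = (b == cadd a c).
Proof. by move: a b c; do 3!case=> [[] []]. Qed.

Lemma distinct3_cadd x y z : inK x -> inK y -> inK z ->
  x != y -> y != z -> x != z -> z = cadd x y.
Proof. by move: x y z; do 3!case=> [[] []]. Qed.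

Lemma cadd_chain X Y Z : X = czero \/ Y = czero -> Y = czero \/ Z = czero ->
  inK (cadd X Y) -> inK (cadd Y Z) -> cadd X Y != cadd Y Z ->
  [/\ Y = czero, X != czero & Z != czero].
Proof. by move: X Y Z; do 3!case=> [[] []]; do 2!case=> // ?. Qed.

Lemma connect_const (T : finType) (e : rel T) (f : T -> col) :
  (forall a b, e a b -> f a = f b) -> forall x y, connect e x y -> f x = f y.
Proof.
move=> f_e x y /connectP [p xp ->]; elim: p x xp => //= a p IHp x /andP [xa ap].
by rewrite (f_e _ _ xa); apply: IHp.
Qed.

Lemma uniq_card_mem (T : finType) (P : {pred T}) (s : seq T) :
  uniq s -> #|P| = size s -> {subset s <= P} -> P =i s.
Proof.
move=> s_uniq cardP sP.
have /subset_cardP eq_sP : #|s| = #|P| by rewrite cardP; apply/card_uniqP.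
have s_eq : s =i P by apply/eq_sP/subsetP.
by move=> d; rewrite s_eq.
Qed.

Lemma neq_att (M : mpole) (p q : mD M) x y :
  att p = Some x -> att q = Some y -> x != y -> p != q.
Proof. by move=> px qy; apply: contraNneq => pq; move: px; rewrite pq qy => -[->]. Qed.

Definition proper_at (M : mpole) (F : mD M -> col) (x : mV M) : Prop :=
  forall d d', d != d' -> att d = Some x -> att d' = Some x -> F d != F d'.

Lemma colouringP (M : mpole) (F : mD M -> col) :
  colouring M F <->
  [/\ forall d, inK (F d), forall d d', lnk d d' -> F d = F d' & forall x, proper_at F x].
Proof.
by split=> [[FK Flnk Fx] | [FK Flnk Fx]]; split=> // d d' x; apply: Fx.
Qed.

Lemma neq_on_triple (T : eqType) (F : T -> col) p q s d d' :
  F p != F q -> F q != F s -> F p != F s ->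
  d \in [:: p; q; s] -> d' \in [:: p; q; s] -> d != d' -> F d != F d'.
Proof.
move=> pq qs ps; rewrite !inE => /or3P [] /eqP -> /or3P [] /eqP -> dd';
  rewrite ?eqxx // in dd'; by rewrite // eq_sym.
Qed.

Lemma proper_at_ends (M : mpole) (F : mD M -> col) x p q s :
  (forall d, (att d == Some x) = (d \in [:: p; q; s])) ->
  F p != F q -> F q != F s -> F p != F s -> proper_at F x.
Proof.
move=> ends_x pq qs ps d d' dd' /eqP d_x /eqP d'_x.
by apply: (neq_on_triple pq qs ps) dd'; rewrite -ends_x.
Qed.

Section CubicVertex.
Variables (M : mpole) (x : mV M).
Hypothesis deg_x : #|[pred d : mD M | att d == Some x]| = 3.

Lemma cubic_ends p q s : att p = Some x -> att q = Some x -> att s = Some x ->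
  uniq [:: p; q; s] -> forall d, (att d == Some x) = (d \in [:: p; q; s]).
Proof.
move=> px qx sx pqs_uniq.
apply: (uniq_card_mem (P := [pred d | att d == Some x])) => // d.
by rewrite !inE => /or3P [] /eqP ->; rewrite /= ?px ?qx ?sx.
Qed.

Lemma sum_at_ends (F : mD M -> col) p q s :
  (forall d, (att d == Some x) = (d \in [:: p; q; s])) ->
  \big[cadd/czero]_(d | att d == Some x) F d = cadd (cadd (F p) (F q)) (F s).
Proof.
move=> ends_x; have pqs_uniq : uniq [:: p; q; s].
  by apply/card_uniqP; rewrite -(eq_card ends_x).
by rewrite (eq_bigl _ _ ends_x) -big_uniq //= !big_cons big_nil caddc0 caddA.
Qed.

Lemma sum_at_proper_vertex (F : mD M -> col) :
  (forall d, att d = Some x -> inK (F d)) -> proper_at F x ->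
  \big[cadd/czero]_(d | att d == Some x) F d = czero.
Proof.
move=> FK Fx; set P := [pred d : mD M | att d == Some x].
have: size (enum P) = 3 by rewrite -cardE.
case P_enum: (enum P) (enum_uniq P) => [|p [|q [|s [|]]]] // pqs_uniq _.
have ends_x d : P d = (d \in [:: p; q; s]) by rewrite -P_enum mem_enum.
have [px qx sx] : [/\ att p = Some x, att q = Some x & att s = Some x].
  by split; apply/eqP; rewrite -[_ == _]/(P _) ends_x !inE eqxx ?orbT.
rewrite (sum_at_ends _ ends_x).
move: pqs_uniq; rewrite /= !inE negb_or andbT => /andP [/andP [pq ps] qs].
by rewrite [F s](@distinct3_cadd (F p) (F q)) ?caddxx ?FK ?Fx.
Qed.

End CubicVertex.

Section Edges.
Variable M : mpole.
Hypothesis M_wf : wf_edges M.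

Lemma eqE_sym : symmetric (@eqE M).
Proof. by apply: sym_connect_sym => a b; apply: orbC. Qed.

Lemma eqE_pair (p q : mD M) : p != q -> eqE p q -> forall z, eqE p z = (z \in [:: p; q]).
Proof.
move=> pq p_q; apply: (uniq_card_mem (P := [pred z | eqE p z])).
- by rewrite /= inE pq.
- exact: M_wf.
by move=> z; rewrite !inE => /orP [] /eqP ->; [apply: connect0 | apply: p_q].
Qed.

Lemma eqE_pair_closed (p q d d' : mD M) : p != q -> eqE p q -> eqE d d' ->
  (d \in [:: p; q]) = (d' \in [:: p; q]).
Proof.
move=> pq p_q dd'; have d'd : eqE d' d by rewrite eqE_sym.
by rewrite -!(eqE_pair pq p_q); apply/idP/idP => p_e; apply: connect_trans p_e _.
Qed.

Definition partner (d : mD M) : mD M := odflt d [pick d' | eqE d d' && (d' != d)].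

Lemma partnerP d : eqE d (partner d) /\ partner d != d.
Proof.
rewrite /partner; case: pickP => [d' /andP [] // | no_partner].
have : #|[pred d' | eqE d d']| <= #|[:: d]|.
  apply/subset_leq_card/subsetP => z; rewrite !inE => dz.
  by move: (no_partner z) => /= /negbT; rewrite negb_and dz negbK.
by rewrite M_wf (card_uniqP (isT : uniq [:: d])).
Qed.

Lemma partnerK : involutive partner.
Proof.
move=> d; have [d_p p_d] := partnerP d; have [p_pp pp_p] := partnerP (partner d).
have: eqE d (partner (partner d)) by apply: connect_trans p_pp.
rewrite (eqE_pair _ d_p) 1?eq_sym // !inE => /orP [] /eqP // pp_eq.
by rewrite pp_eq eqxx in pp_p.
Qed.

Lemma sum_ends_eq0 (chi : mD M -> col) :
  (forall d d', eqE d d' -> chi d = chi d') -> \big[cadd/czero]_(d : mD M) chi d = czero.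
Proof.
move=> chi_eqE.
pose first_end d := (enum_rank d < enum_rank (partner d))%N.
rewrite (bigID first_end) /= (reindex_inj (inv_inj partnerK) (P := fun d => ~~ first_end d)) /=.
have -> : \big[cadd/czero]_(d | ~~ first_end (partner d)) chi (partner d)
        = \big[cadd/czero]_(d | first_end d) chi d.
  apply: eq_big => d; last by move=> _; apply/esym/chi_eqE; case: (partnerP d).
  rewrite /first_end partnerK -leqNgt leq_eqVlt; case: eqP => // /val_inj/enum_rank_inj pd.
  by case: (partnerP d) => _; rewrite -pd eqxx.
exact: caddxx.
Qed.

Lemma sum_at_vertices_eq0 (chi : mD M -> col) : is_graph M ->
  (forall d d', eqE d d' -> chi d = chi d') ->
  \big[cadd/czero]_(x : mV M) \big[cadd/czero]_(d | att d == Some x) chi d = czero.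
Proof.
move=> M_graph chi_eqE; rewrite -[RHS](sum_ends_eq0 chi_eqE).
under eq_bigr do rewrite big_mkcond.
rewrite exchange_big /=; apply: eq_bigr => d _.
case d_att: (att d) (M_graph d) => [y|] // _.
rewrite (bigD1 y) //= eqxx big1 ?caddc0 // => x /negbTE xy.
by case: eqP => // -[] /eqP; rewrite eq_sym xy.
Qed.

End Edges.

Definition semiedges (N : pole221) : seq (mD (pm N)) :=
  [:: pi1 N; pi2 N; po1 N; po2 N; pr N].

Definition free_semiedges (N : pole221) : bool :=
  uniq (semiedges N) && all (fun d => att d == None) (semiedges N).

Lemma free_semiedges_distinct (N : pole221) : free_semiedges N ->
  [/\ pi1 N \notin [:: po1 N; po2 N], pi2 N \notin [:: po1 N; po2 N]
     & pr N \notin [:: po1 N; po2 N]] /\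
  [/\ po1 N \notin [:: pi1 N; pi2 N], po2 N \notin [:: pi1 N; pi2 N]
     & pr N \notin [:: pi1 N; pi2 N]].
Proof.
case/andP => + _; rewrite /= !inE !negb_or.
move=> /and5P [/and4P [_ i1o1 i1o2 i1r] /and3P [i2o1 i2o2 i2r] /andP [_ o1r] o2r _].
rewrite ![po1 N == _]eq_sym ![po2 N == _]eq_sym ![pr N == _]eq_sym.
by rewrite i1o1 i1o2 i1r i2o1 i2o2 i2r o1r o2r.
Qed.

Lemma attached_not_semiedge (N : pole221) d x :
  free_semiedges N -> att d = Some x -> d \notin semiedges N.
Proof. by case/andP => _ /allP free d_x; apply/negP => /free; rewrite d_x. Qed.

Definition negator_law (N : pole221) : Prop :=
  forall psi, colouring (pm N) psi ->
    psi (pr N) = cadd (cadd (psi (pi1 N)) (psi (pi2 N))) (cadd (psi (po1 N)) (psi (po2 N)))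
    /\ (psi (pi1 N) = psi (pi2 N) \/ psi (po1 N) = psi (po2 N)).

Section Negator.
Variables (G : mpole) (u w v : mV G) (a1 b1 a2 b2 : mD G).
Variables (i1 i2 o1 o2 r : mD (Neg u w v a1 b1 a2 b2)).
Hypotheses (G_wf : wf_edges G) (G_graph : is_graph G) (G_cubic : cubic G).
Hypotheses (uw : u != w) (wv : w != v) (uv : u != v).
Hypotheses (a1_u : att a1 = Some u) (b1_w : att b1 = Some w) (a1_b1 : eqE a1 b1).
Hypotheses (a2_w : att a2 = Some w) (b2_v : att b2 = Some v) (a2_b2 : eqE a2 b2).
Hypotheses (i1_u : att (val i1) = Some u) (i2_u : att (val i2) = Some u) (i1i2 : i1 != i2).
Hypotheses (o1_v : att (val o1) = Some v) (o2_v : att (val o2) = Some v) (o1o2 : o1 != o2).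
Hypothesis r_w : att (val r) = Some w.

Local Notation ND := (mD (Neg u w v a1 b1 a2 b2)).
Local Notation removed := [:: a1; b1; a2; b2].

Lemma neg_edge1 d : eqE a1 d = (d \in [:: a1; b1]).
Proof. exact: (eqE_pair G_wf (neq_att a1_u b1_w uw) a1_b1). Qed.

Lemma neg_edge1_closed d d' : eqE d d' -> (d \in [:: a1; b1]) = (d' \in [:: a1; b1]).
Proof. exact: (eqE_pair_closed G_wf (neq_att a1_u b1_w uw) a1_b1). Qed.

Lemma neg_edge2_closed d d' : eqE d d' -> (d \in [:: a2; b2]) = (d' \in [:: a2; b2]).
Proof. exact: (eqE_pair_closed G_wf (neq_att a2_w b2_v wv) a2_b2). Qed.

Lemma neg_edge2_notin_edge1 d : d \in [:: a2; b2] -> d \notin [:: a1; b1].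
Proof.
move=> d_e2; rewrite -neg_edge1; apply: contraL d_e2 => a1_d.
rewrite -(neg_edge2_closed a1_d) !inE negb_or.
by rewrite (neq_att a1_u a2_w uw) (neq_att a1_u b2_v uv).
Qed.

Lemma mem_removed d : (d \in removed) = (d \in [:: a1; b1]) || (d \in [:: a2; b2]).
Proof. by rewrite -mem_cat. Qed.

Lemma neg_val_neq (y : ND) d : d \in removed -> d != val y.
Proof. by move=> d_rm; apply: contraTneq d_rm => ->; exact: (valP y). Qed.

Lemma neg_ends_u d : (att d == Some u) = (d \in [:: a1; val i1; val i2]).
Proof.
apply: cubic_ends => //.
by rewrite !cons_uniq !inE !negb_or val_eqE i1i2 !neg_val_neq ?inE ?eqxx.
Qed.

Lemma neg_ends_v d : (att d == Some v) = (d \in [:: b2; val o1; val o2]).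
Proof.
apply: cubic_ends => //.
by rewrite !cons_uniq !inE !negb_or val_eqE o1o2 !neg_val_neq ?inE ?eqxx ?orbT.
Qed.

Lemma neg_ends_w d : (att d == Some w) = (d \in [:: b1; val r; a2]).
Proof.
apply: cubic_ends => //.
have : a2 \notin [:: a1; b1] by apply: neg_edge2_notin_edge1; rewrite inE eqxx.
rewrite !cons_uniq !inE !negb_or [val r == a2]eq_sym !neg_val_neq ?inE ?eqxx ?orbT //=.
by case/andP => _; rewrite andbT eq_sym.
Qed.

Lemma neg_kept_val d : d \notin removed -> exists y : ND, d = val y.
Proof. by move=> d_kept; exists (Sub d d_kept); rewrite SubK. Qed.

Lemma neg_att_outside x (x_kept : x \notin [:: u; w; v]) d :
  att d = Some x -> exists2 y : ND, d = val y & att y = Some (Sub x x_kept).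
Proof.
move=> d_x; have d_kept : d \notin removed.
  apply: contra x_kept; rewrite !inE => /or4P [] /eqP d_rm; move: d_x;
    by rewrite d_rm ?a1_u ?b1_w ?a2_w ?b2_v => -[<-]; rewrite eqxx ?orbT.
have [y d_y] := neg_kept_val d_kept; exists y => //.
by rewrite /= -d_y d_x /= insubT.
Qed.

Section Extension.
Variable psi : ND -> col.
Hypothesis psi_col : colouring _ psi.

Local Notation X := (cadd (psi i1) (psi i2)).
Local Notation Y := (cadd (psi o1) (psi o2)).

Definition neg_extension (d : mD G) : col :=
  if @insub _ _ ND d is Some y then psi y else if d \in [:: a1; b1] then X else Y.

Local Notation chi := neg_extension.

Lemma neg_extension_val (y : ND) : chi (val y) = psi y.
Proof. by rewrite /chi valK. Qed.

Lemma neg_extension_edge1 d : d \in [:: a1; b1] -> chi d = X.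
Proof.
by move=> d_e1; rewrite /chi insubN ?negbK ?mem_removed ?d_e1.
Qed.

Lemma neg_extension_edge2 d : d \in [:: a2; b2] -> chi d = Y.
Proof.
move=> d_e2; have /negbTE d_e1 := neg_edge2_notin_edge1 d_e2.
by rewrite /chi insubN ?negbK ?mem_removed ?d_e2 ?orbT // d_e1.
Qed.

Lemma neg_extension_removed : [/\ chi a1 = X, chi b1 = X, chi a2 = Y & chi b2 = Y].
Proof.
by split; [apply: neg_extension_edge1 | apply: neg_extension_edge1 |
  apply: neg_extension_edge2 | apply: neg_extension_edge2]; rewrite !inE eqxx ?orbT.
Qed.

Lemma neg_extension_eqE d d' : eqE d d' -> chi d = chi d'.
Proof.
move=> dd'; case d_e1: (d \in [:: a1; b1]).
  by rewrite !neg_extension_edge1 // -(neg_edge1_closed dd').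
case d_e2: (d \in [:: a2; b2]).
  by rewrite !neg_extension_edge2 // -(neg_edge2_closed dd').
have kept e : e \notin [:: a1; b1] -> e \notin [:: a2; b2] -> e \notin removed.
  by rewrite mem_removed negb_or => -> ->.
have [y d_y] := neg_kept_val (kept _ (negbT d_e1) (negbT d_e2)).
have [y' d'_y'] : exists y' : ND, d' = val y'.
  apply: neg_kept_val; apply: kept.
  - by rewrite -(neg_edge1_closed dd') d_e1.
  by rewrite -(neg_edge2_closed dd') d_e2.
case: psi_col => _ psi_lnk _.
by rewrite d_y d'_y' in dd' *; rewrite !neg_extension_val; apply: psi_lnk.
Qed.

Lemma neg_extension_outside x : x \notin [:: u; w; v] ->
  (forall d, att d = Some x -> inK (chi d)) /\ proper_at chi x.
Proof.
case: psi_col => psi_K _ psi_proper x_kept; split.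
  by move=> d /(neg_att_outside x_kept) [y -> _]; rewrite neg_extension_val.
move=> d d' dd' /(neg_att_outside x_kept) [y d_y y_x] /(neg_att_outside x_kept) [y' d'_y' y'_x].
rewrite d_y d'_y' !neg_extension_val; apply: psi_proper y_x y'_x.
by rewrite -val_eqE -d_y -d'_y'.
Qed.

Lemma negator_r_sum : psi r = cadd X Y.
Proof.
have [chi_a1 chi_b1 chi_a2 chi_b2] := neg_extension_removed.
have others : \big[cadd/czero]_(x | x != w) \big[cadd/czero]_(d | att d == Some x) chi d
              = czero.
  apply: big1 => x xw; have [-> | xu] := eqVneq x u.
    rewrite (sum_at_ends (G_cubic u) _ neg_ends_u).
    by rewrite chi_a1 !neg_extension_val -caddA caddxx.
  have [-> | xv] := eqVneq x v.
    rewrite (sum_at_ends (G_cubic v) _ neg_ends_v).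
    by rewrite chi_b2 !neg_extension_val -caddA caddxx.
  have [chi_K chi_proper] : (forall d, att d = Some x -> inK (chi d)) /\ proper_at chi x.
    by apply: neg_extension_outside; rewrite !inE !negb_or xu xw xv.
  exact: sum_at_proper_vertex (G_cubic x) _ chi_K chi_proper.
have := sum_at_vertices_eq0 G_wf G_graph neg_extension_eqE.
rewrite (bigD1 w) //= others caddc0 (sum_at_ends (G_cubic w) _ neg_ends_w) => /eqP.
by rewrite chi_b1 chi_a2 neg_extension_val cadd3_eq0 => /eqP.
Qed.

Lemma neg_extension_colouring : psi i1 != psi i2 -> psi o1 != psi o2 -> colouring G chi.
Proof.
move=> i12 o12; case: psi_col => psi_K _ _.
have [chi_a1 chi_b1 chi_a2 chi_b2] := neg_extension_removed.
have X_K : inK X by rewrite inK_cadd.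
have Y_K : inK Y by rewrite inK_cadd.
apply/colouringP; split.
- by move=> d; rewrite /chi; case: insub => [y|]; [apply: psi_K | case: ifP].
- by move=> d d' dd'; apply: neg_extension_eqE; apply: connect1; rewrite /= dd'.
move=> x; have [-> | xu] := eqVneq x u.
  apply: (proper_at_ends neg_ends_u);
    rewrite ?chi_a1 ?neg_extension_val // eq_sym.
  - exact: neq_caddl (psi_K _).
  - exact: neq_caddr (psi_K _).
have [-> | xv] := eqVneq x v.
  apply: (proper_at_ends neg_ends_v);
    rewrite ?chi_b2 ?neg_extension_val // eq_sym.
  - exact: neq_caddl (psi_K _).
  - exact: neq_caddr (psi_K _).
have [-> | xw] := eqVneq x w.
  apply: (proper_at_ends neg_ends_w);
    rewrite ?chi_b1 ?chi_a2 ?neg_extension_val ?negator_r_sum.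
  - exact: neq_caddl.
  - by rewrite eq_sym neq_caddr.
  - by rewrite -inK_cadd -negator_r_sum.
have [chi_K chi_proper] : (forall d, att d = Some x -> inK (chi d)) /\ proper_at chi x.
  by apply: neg_extension_outside; rewrite !inE !negb_or xu xw xv.
exact: chi_proper.
Qed.

Lemma negator_pairs : ~ colourable G -> psi i1 = psi i2 \/ psi o1 = psi o2.
Proof.
move=> G_uncol; have [|i12] := eqVneq (psi i1) (psi i2); first by left.
have [|o12] := eqVneq (psi o1) (psi o2); first by right.
by case: G_uncol; exists chi; apply: neg_extension_colouring.
Qed.

End Extension.

Lemma Neg_negator_law : ~ colourable G -> negator_law (NegPole i1 i2 o1 o2 r).
Proof. by move=> G_uncol psi psi_col; split; [apply: negator_r_sum | apply: negator_pairs]. Qed.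

Lemma Neg_free_semiedges : free_semiedges (NegPole i1 i2 o1 o2 r).
Proof.
have neq_at (y y' : ND) x x' :
    att (val y) = Some x -> att (val y') = Some x' -> x != x' -> y != y'.
  by move=> y_x y'_x' xx'; rewrite -val_eqE (neq_att y_x y'_x').
rewrite /free_semiedges /= !inE !negb_or i1i2 o1o2 /=.
rewrite !(neq_at _ _ _ _ i1_u o1_v uv, neq_at _ _ _ _ i1_u o2_v uv, neq_at _ _ _ _ i1_u r_w uw).
rewrite !(neq_at _ _ _ _ i2_u o1_v uv, neq_at _ _ _ _ i2_u o2_v uv, neq_at _ _ _ _ i2_u r_w uw).
have vw : v != w by rewrite eq_sym.
rewrite (neq_at _ _ _ _ o1_v r_w vw) (neq_at _ _ _ _ o2_v r_w vw) /=.
by rewrite i1_u i2_u o1_v o2_v r_w /= !insubN // !inE eqxx ?orbT.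
Qed.

End Negator.

Lemma negator_data_pole (G : mpole) (u w v : mV G) (a1 b1 a2 b2 : mD G)
    (i1 i2 o1 o2 r : mD (Neg u w v a1 b1 a2 b2)) :
  negator_data i1 i2 o1 o2 r ->
  free_semiedges (NegPole i1 i2 o1 o2 r) /\ negator_law (NegPole i1 i2 o1 o2 r).
Proof.
case=> [[G_wf G_graph G_cubic _ G_uncol] [uw wv uv] [a1_u b1_w a1_b1] [a2_w b2_v a2_b2]
  [[i1_u i2_u i1i2] [o1_v o2_v o1o2] r_w]].
by split; [apply: Neg_free_semiedges | apply: Neg_negator_law].
Qed.

Section NNColourings.
Variables N1 N2 : pole221.
Hypotheses (N1_free : free_semiedges N1) (N2_free : free_semiedges N2).

Local Notation T := (NNT N1 N2).
Local Notation M := (NN N1 N2).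
Local Notation removed := (NNremoved N1 N2).

Definition NNrel : rel T := fun a b => NNlinkT a b || NNlinkT b a.

Lemma NNkept_left d : d \notin [:: po1 N1; po2 N1] -> (inl (inl d) : T) \notin removed.
Proof.
by apply: contra; rewrite !inE => /or4P [] /eqP // [->]; rewrite eqxx ?orbT.
Qed.

Lemma NNkept_right d : d \notin [:: pi1 N2; pi2 N2] -> (inl (inr d) : T) \notin removed.
Proof.
by apply: contra; rewrite !inE => /or4P [] /eqP // [->]; rewrite eqxx ?orbT.
Qed.

Lemma NNsubK t : t \notin removed -> val (NNsub t) = t.
Proof. by move=> t_kept; rewrite /NNsub val_insubd t_kept. Qed.

Lemma NN_semiedges_val :
  [/\ val (pi1 M) = inl (inl (pi1 N1)), val (pi2 M) = inl (inl (pi2 N1)),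
      val (po1 M) = inl (inr (po1 N2)) & val (po2 M) = inl (inr (po2 N2))].
Proof.
have [[i1 i2 _] _] := free_semiedges_distinct N1_free; have [_ [o1 o2 _]] := free_semiedges_distinct N2_free.
by split; apply: NNsubK; [apply: NNkept_left | apply: NNkept_left |
  apply: NNkept_right | apply: NNkept_right].
Qed.

Lemma NNatt_left d x : att d = Some x -> NNattT (inl (inl d) : T) = Some (inl (inl x)).
Proof.
move=> d_x; have := attached_not_semiedge N1_free d_x.
by rewrite !inE !negb_or => /and5P [_ _ _ _ /negbTE] /= ->; rewrite d_x.
Qed.

Lemma NNatt_right d x : att d = Some x -> NNattT (inl (inr d) : T) = Some (inl (inr x)).
Proof.
move=> d_x; have := attached_not_semiedge N2_free d_x.
by rewrite !inE !negb_or => /and5P [_ _ _ _ /negbTE] /= ->; rewrite d_x.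
Qed.

Lemma NNatt_leftP (s : T) z :
  NNattT s = Some (inl (inl z)) -> exists2 d, s = inl (inl d) & att d = Some z.
Proof.
case: s => [[d|d]|[]] //=; case: ifP => // _; case d_att: (att d) => [y|] //= [<-].
by exists d.
Qed.

Lemma NNatt_rightP (s : T) z :
  NNattT s = Some (inl (inr z)) -> exists2 d, s = inl (inr d) & att d = Some z.
Proof.
case: s => [[d|d]|[]] //=; case: ifP => // _; case d_att: (att d) => [y|] //= [<-].
by exists d.
Qed.

Lemma NNatt_newP (s : T) :
  NNattT s = Some (inr tt) -> s \in [:: inl (inl (pr N1)); inl (inr (pr N2)); inr false].
Proof.
case: s => [[d|d]|[]] //=; case: ifP => [/eqP -> | _]; rewrite ?inE ?eqxx ?orbT //;
  by case: (att d).
Qed.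

Definition NN_split (psi1 : mD (pm N1) -> col) (psi2 : mD (pm N2) -> col) : Prop :=
  [/\ colouring (pm N1) psi1, colouring (pm N2) psi2,
      psi1 (po1 N1) = psi2 (pi1 N2), psi1 (po2 N1) = psi2 (pi2 N2)
    & psi1 (pr N1) != psi2 (pr N2)].

Definition NN_tuple (psi1 : mD (pm N1) -> col) (psi2 : mD (pm N2) -> col) :=
  (psi1 (pi1 N1), psi1 (pi2 N1), psi2 (po1 N2), psi2 (po2 N2),
   cadd (psi1 (pr N1)) (psi2 (pr N2))).

Section Restriction.
Variable phi : mD (pm M) -> col.
Hypothesis phi_col : colouring (pm M) phi.

(* Junction ends whose class contains no end of NN (a closed cycle created by
   the junction) get an arbitrary colour. *)
Definition NN_ext (t : T) : col :=
  if [pick y : mD (pm M) | connect NNrel t (val y)] is Some y then phi y else (true, true).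

Lemma NN_ext_connect t t' : connect NNrel t t' -> NN_ext t = NN_ext t'.
Proof.
have NNrel_sym : connect_sym NNrel by apply: sym_connect_sym => a b; apply: orbC.
move=> tt'; rewrite /NN_ext (@eq_pick _ _ (fun y => connect NNrel t' (val y))) // => y.
by apply/idP/idP; apply: connect_trans; rewrite // NNrel_sym.
Qed.

Lemma NN_ext_val y : NN_ext (val y) = phi y.
Proof.
case: phi_col => _ phi_lnk _; rewrite /NN_ext; case: pickP => [y' y_y' | no_y].
  by apply/esym/phi_lnk.
by move: (no_y y); rewrite connect0.
Qed.

Lemma NN_ext_K t : inK (NN_ext t).
Proof. by case: phi_col => phi_K _ _; rewrite /NN_ext; case: pickP. Qed.

Lemma NN_ext_proper t t' z : t \notin removed -> t' \notin removed -> t != t' ->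
  NNattT t = Some z -> NNattT t' = Some z -> NN_ext t != NN_ext t'.
Proof.
move=> t_kept t'_kept tt' t_z t'_z.
rewrite -(NNsubK t_kept) -(NNsubK t'_kept) !NN_ext_val.
case: phi_col => _ _ phi_proper; apply: (phi_proper _ _ z); rewrite -?val_eqE /= ?NNsubK //.
Qed.

Lemma NN_restrict_colouring (N : mpole) (emb : mD N -> T) (vemb : mV N -> NNV N1 N2) :
  (forall d d', lnk d d' -> NNrel (emb d) (emb d')) -> injective emb ->
  (forall d x, att d = Some x -> emb d \notin removed /\ NNattT (emb d) = Some (vemb x)) ->
  colouring N (NN_ext \o emb).
Proof.
move=> emb_rel emb_inj emb_att; apply/colouringP; split => [d | d d' dd' | x d d' dd' d_x d'_x].
- exact: NN_ext_K.
- by apply: NN_ext_connect; apply: connect1; apply: emb_rel.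
have [d_kept d_att] := emb_att _ _ d_x; have [d'_kept d'_att] := emb_att _ _ d'_x.
by apply: NN_ext_proper d_att d'_att; rewrite ?(inj_eq emb_inj).
Qed.

Lemma NN_restrict :
  exists psi1 psi2, NN_split psi1 psi2 /\ ptuple M phi = NN_tuple psi1 psi2.
Proof.
have [[i1 i2 r1] _] := free_semiedges_distinct N1_free; have [_ [o1 o2 r2]] := free_semiedges_distinct N2_free.
exists (fun d => NN_ext (inl (inl d))), (fun d => NN_ext (inl (inr d))).
have r1_kept := NNkept_left r1; have r2_kept := NNkept_right r2.
have e_kept : (inr false : T) \notin removed by [].
have [r1_r2 r2_e r1_e] : [/\ NN_ext (inl (inl (pr N1))) != NN_ext (inl (inr (pr N2))),
    NN_ext (inl (inr (pr N2))) != NN_ext (inr false)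
  & NN_ext (inl (inl (pr N1))) != NN_ext (inr false)].
  by split; apply: (NN_ext_proper (z := inr tt)); rewrite //= eqxx.
split; first split => //.
- apply: (NN_restrict_colouring (vemb := fun x => inl (inl x))) => [d d' dd'| d d' [] //|d x d_x].
    by rewrite /NNrel /= dd'.
  split; last exact: NNatt_left d_x.
  apply: NNkept_left; have := attached_not_semiedge N1_free d_x.
  by rewrite !inE !negb_or => /and5P [_ _ -> ->].
- apply: (NN_restrict_colouring (vemb := fun x => inl (inr x))) => [d d' dd'| d d' [] //|d x d_x].
    by rewrite /NNrel /= dd'.
  split; last exact: NNatt_right d_x.
  apply: NNkept_right; have := attached_not_semiedge N2_free d_x.
  by rewrite !inE !negb_or => /and5P [-> ->].
- by apply: NN_ext_connect; apply: connect1; rewrite /NNrel /= !eqxx.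
- by apply: NN_ext_connect; apply: connect1; rewrite /NNrel /= !eqxx orbT.
have [vi1 vi2 vo1 vo2] := NN_semiedges_val.
rewrite /ptuple /NN_tuple -!NN_ext_val vi1 vi2 vo1 vo2.
congr (_, _); rewrite -(distinct3_cadd (NN_ext_K _) (NN_ext_K _) (NN_ext_K _) r1_r2 r2_e r1_e).
by apply: NN_ext_connect; apply: connect1.
Qed.

End Restriction.

Lemma NN_glue psi1 psi2 : NN_split psi1 psi2 ->
  exists phi, colouring (pm M) phi /\ ptuple M phi = NN_tuple psi1 psi2.
Proof.
case=> C1 C2 j1 j2 r12; case: (C1) => K1 lnk1 proper1; case: (C2) => K2 lnk2 proper2.
pose e := cadd (psi1 (pr N1)) (psi2 (pr N2)).
pose f (t : T) := match t with inl (inl d) => psi1 d | inl (inr d) => psi2 d | inr _ => e end.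
have f_rel s t : NNrel s t -> f s = f t.
  move: s t => [[a|a]|[]] [[b|b]|[]]; rewrite /NNrel /= ?orbF //.
  - by case/orP => [/lnk1 -> | /lnk1 ->].
  - by case/orP => /andP [/eqP -> /eqP ->].
  - by case/orP => /andP [/eqP -> /eqP ->].
  by case/orP => [/lnk2 -> | /lnk2 ->].
exists (fun y => f (val y)); split; last first.
  by have [vi1 vi2 vo1 vo2] := NN_semiedges_val; rewrite /ptuple vi1 vi2 vo1 vo2.
apply/colouringP; split => [y | y y' | z y y' yy' y_z y'_z].
- by case: (val y) => [[d|d]|_] /=; rewrite ?inK_cadd.
- exact: connect_const f_rel (val y) (val y').
rewrite -val_eqE in yy'; move: z y_z y'_z => [[z|z]|[]].
- move=> /NNatt_leftP [d d_eq d_z] /NNatt_leftP [d' d'_eq d'_z].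
  rewrite d_eq d'_eq in yy' *; apply: proper1 d_z d'_z.
  by rewrite !(inj_eq inl_inj) in yy'.
- move=> /NNatt_rightP [d d_eq d_z] /NNatt_rightP [d' d'_eq d'_z].
  rewrite d_eq d'_eq in yy' *; apply: proper2 d_z d'_z.
  by rewrite (inj_eq inl_inj) (inj_eq inr_inj) in yy'.
move=> /NNatt_newP y_new /NNatt_newP y'_new.
apply: (neq_on_triple (F := f)) y_new y'_new yy' => //=.
- exact: neq_caddr (K1 _).
- exact: neq_caddl (K2 _).
Qed.

Lemma NN_negator_colouring phi : negator_law N1 -> negator_law N2 ->
  colouring (pm M) phi ->
  [/\ phi (pi1 M) != phi (pi2 M), phi (po1 M) != phi (po2 M) &
      cadd (cadd (cadd (cadd (phi (pi1 M)) (phi (pi2 M))) (phi (po1 M))) (phi (po2 M)))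
           (phi (pr M)) = czero].
Proof.
move=> law1 law2 /NN_restrict [psi1 [psi2 [[C1 C2 j1 j2 r12] [-> -> -> -> ->]]]].
have [r1E pair1] := law1 _ C1; have [r2E pair2] := law2 _ C2.
rewrite -j1 -j2 in r2E pair2.
have [Y0 X0 Z0] : [/\ cadd (psi1 (po1 N1)) (psi1 (po2 N1)) = czero,
    cadd (psi1 (pi1 N1)) (psi1 (pi2 N1)) != czero
  & cadd (psi2 (po1 N2)) (psi2 (po2 N2)) != czero].
  apply: cadd_chain; rewrite -?r1E -?r2E //; case: C1 => // K1 _ _; case: C2 => // K2 _ _.
  - by case: pair1 => ->; rewrite caddxx; [left | right].
  by case: pair2 => ->; rewrite caddxx; [left | right].
rewrite !cadd_eq0 in X0 Z0; split => //.
rewrite r1E r2E Y0 caddc0 cadd0c -[cadd (cadd _ (psi2 (po1 N2))) _]caddA.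
exact: caddxx.
Qed.

Lemma NN_perfect_colouring : perfect N1 -> perfect N2 ->
  forall a b c d e : col, inK a -> inK b -> inK c -> inK d -> inK e ->
  a != b -> c != d -> cadd (cadd (cadd (cadd a b) c) d) e = czero ->
  exists phi, colouring (pm M) phi /\ ptuple M phi = (a, b, c, d, e).
Proof.
move=> perf1 perf2 a b c d e aK bK cK dK eK ab cd sum0.
have e_eq : e = cadd (cadd a b) (cadd c d) by apply/esym/eqP; rewrite -cadd_eq0 caddA sum0.
pose x : col := (true, true).
have [psi1 [C1 [i1 i2 o1 o2 r1]]] :
    exists psi1, colouring (pm N1) psi1 /\ ptuple N1 psi1 = (a, b, x, x, cadd a b).
  by apply/perf1; exists x, a, b; split => //; right.
have [psi2 [C2 [i1' i2' o1' o2' r2]]] :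
    exists psi2, colouring (pm N2) psi2 /\ ptuple N2 psi2 = (x, x, c, d, cadd c d).
  by apply/perf2; exists x, c, d; split => //; left.
have [|phi [phi_col phi_t]] := @NN_glue psi1 psi2.
  split=> //; [by rewrite o1 i1' | by rewrite o2 i2' | by rewrite r1 r2 -inK_cadd -e_eq].
by exists phi; rewrite phi_t /NN_tuple i1 i2 o1' o2' r1 r2 -e_eq.
Qed.

End NNColourings.

Theorem mainTheorem2
  (G1 : mpole) (u1 w1 v1 : mV G1) (a1 b1 c1 d1 : mD G1)
  (i1 i1' o1 o1' r1 : mD (Neg u1 w1 v1 a1 b1 c1 d1))
  (G2 : mpole) (u2 w2 v2 : mV G2) (a2 b2 c2 d2 : mD G2)
  (i2 i2' o2 o2' r2 : mD (Neg u2 w2 v2 a2 b2 c2 d2)) :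
  negator_data i1 i1' o1 o1' r1 ->
  negator_data i2 i2' o2 o2' r2 ->
  let N1 := NegPole i1 i1' o1 o1' r1 in
  let N2 := NegPole i2 i2' o2 o2' r2 in
  let M := NN N1 N2 in
  (forall phi : mD (pm M) -> col, colouring (pm M) phi ->
     [/\ phi (pi1 M) != phi (pi2 M),
         phi (po1 M) != phi (po2 M) &
         cadd (cadd (cadd (cadd (phi (pi1 M)) (phi (pi2 M))) (phi (po1 M)))
                    (phi (po2 M))) (phi (pr M)) = czero])
  /\
  (perfect N1 -> perfect N2 ->
   forall a b c d e : col,
     inK a -> inK b -> inK c -> inK d -> inK e ->
     a != b -> c != d ->
     cadd (cadd (cadd (cadd a b) c) d) e = czero ->
     exists phi : mD (pm M) -> col,
       colouring (pm M) phi /\ ptuple M phi = (a, b, c, d, e)).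
Proof.
move=> data1 data2 N1 N2 M.
have [free1 law1] := negator_data_pole data1.
have [free2 law2] := negator_data_pole data2.
split=> [phi | ]; first exact: NN_negator_colouring.
exact: NN_perfect_colouring.
Qed.
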